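(* Let $n\ge 1$ and $1<k\le 2n$. Suppose that for every 1D array of size $n$ there is an $S(n,k)$-bit encoding from which sorted 1-sided Top-$k$ queries can be answered. Then every $2\times n$ array $A$ admits an encoding of $2S(n,k)+\lceil 2n\lg 3\rceil+o(n)$ bits from which every sorted 3-sided Top-$k$ query on $A$ can be answered.
   Context: All arrays have pairwise distinct entries from a totally ordered set. For a 1D array $B[1..n]$ and $1\le i\le j\le n$, the query Top-$k(i,j,B)$ returns the positions of the $k$ largest values of $B[i..j]$ (all positions of $B[i..j]$ if it has at most $k$ entries); a query is sorted if the positions must be reported in decreasing order of their values, unsorted if in any order; 1-sided queries are those with $i=1$, 2-sided queries allow arbitrary $i\le j$. For an $m\times n$ array $A$, Top-$k(i,j,a,b,A)$ (with $1\le i\le j\le m$, $1\le a\le b\le n$) returns the positions of the $k$ largest values in the subarray $A[i..j][a..b]$; 3-sided queries are those with $a=1$, 4-sided queries allow arbitrary $a\le b$. An $s$-bit encoding supporting a family of queries is a map assigning to each array a bit string of length at most $s$ such that every query of the family can be answered from this bit string alone, without access to the array. *)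

From mathcomp Require Import all_boot.
Set Implicit Arguments. Unset Strict Implicit. Unset Printing Implicit Defensive.

(* Values are pairwise distinct, so this list is uniquely determined. *)
Definition topk (P : finType) (k : nat) (v : P -> nat) (R : pred P) : seq P :=
  take k (sort (fun x y => v y <= v x) [seq x <- enum P | R x]).

(* 1D array of size n: B : 'I_n -> nat, injective (distinct entries).
   Sorted 1-sided query Top-k(1, j, B) with j 0-indexed. *)
Definition top1 (n k : nat) (B : 'I_n -> nat) (j : 'I_n) : seq 'I_n :=
  topk k B (fun i => i <= j).

Definition enc1D (n k s : nat) : Prop :=
  exists (E : ('I_n -> nat) -> seq bool) (D : seq bool -> 'I_n -> seq 'I_n),
    forall B : 'I_n -> nat, injective B ->
      size (E B) <= s /\ forall j : 'I_n, D (E B) j = top1 k B j.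

(* 2 x n array: A : 'I_2 * 'I_n -> nat, injective; position (row, column).
   Sorted 3-sided query Top-k(i, j, 1, b, A) (0-indexed, i <= j). *)
Definition top3 (n k : nat) (A : 'I_2 * 'I_n -> nat) (i j : 'I_2) (b : 'I_n)
  : seq ('I_2 * 'I_n) :=
  topk k A (fun p => (i <= p.1) && (p.1 <= j) && (p.2 <= b)).

Definition enc2D (n k s : nat) : Prop :=
  exists (E : ('I_2 * 'I_n -> nat) -> seq bool)
         (D : seq bool -> 'I_2 -> 'I_2 -> 'I_n -> seq ('I_2 * 'I_n)),
    forall A : 'I_2 * 'I_n -> nat, injective A ->
      size (E A) <= s /\
      forall (i j : 'I_2) (b : 'I_n), i <= j -> D (E A) i j b = top3 k A i j b.

Definition little_o_n (f : nat -> nat) : Prop :=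
  forall c : nat, 0 < c -> exists N : nat, forall n : nat, N <= n -> c * f n <= n.

From mathcomp Require Import all_boot zify.
From Stdlib Require Import ClassicalEpsilon.
Set Implicit Arguments. Unset Strict Implicit. Unset Printing Implicit Defensive.

(* Call a position of the 2 x n array a candidate if it belongs to the answer
   of the 1-sided query on its own row ending at its own column.  Every
   position reported by a 3-sided query is a candidate, since the row prefix
   ending at it lies inside the query region.  Two candidates of the same row
   are compared by the 1-sided answers of that row: if the left one is absent
   from the answer ending at the right one, it is the smaller, and otherwise
   the order is read off that sorted answer.  Hence the two row encodings
   together with the row labels of the candidates listed in decreasing order
   (at most 2n bits) determine the relative order of all candidates, and so
   every 3-sided answer; a decoder then exists by choice. *)

Lemma card_count_enum (T : finType) (P : pred T) : #|P| = count P (enum T).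
Proof. by rewrite enumT cardE -size_filter. Qed.

Lemma take_filter_all (T : Type) (Y : pred T) k (s : seq T) :
  all Y (take k s) -> take k (filter Y s) = take k s.
Proof.
elim: s k => [|a t IH] [|k] //=; first by rewrite take0.
by case/andP=> Ya /IH; rewrite /= Ya /= => ->.
Qed.

Section TopK.
Variables (T : finType) (k : nat).
Implicit Types (v : T -> nat) (R : pred T).

Definition ge_by v : rel T := fun x y => v y <= v x.

Lemma ge_by_trans v : transitive (ge_by v).
Proof. by move=> x y z h1 h2; apply: leq_trans h2 h1. Qed.

Lemma ge_by_total v : total (ge_by v).
Proof. by move=> x y; rewrite /ge_by leq_total. Qed.

Lemma ge_by_anti v : injective v -> antisymmetric (ge_by v).
Proof. by move=> vI x y /andP[h1 h2]; apply/vI/eqP; rewrite eqn_leq; apply/andP. Qed.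

Lemma ge_by_swap v x y : injective v -> x != y -> ge_by v x y = ~~ ge_by v y x.
Proof. by move=> vI xy; rewrite /ge_by -ltnNge ltn_neqAle (inj_eq vI) eq_sym xy. Qed.

Lemma sorted_ge_by_lt v s : injective v -> sorted (ge_by v) s -> uniq s ->
  {in s &, forall x y, index x s < index y s -> v y < v x}.
Proof.
move=> vI s_sorted s_uniq x y xs ys lt_xy.
have := sorted_ltn_index (@ge_by_trans v) s_sorted x y xs ys lt_xy.
rewrite /ge_by leq_eqVlt => /orP[/eqP/vI eq_yx|//].
by rewrite eq_yx ltnn in lt_xy.
Qed.

Lemma sorted_ge_by_agree v v' s : injective v -> injective v' ->
  sorted (ge_by v) s -> sorted (ge_by v') s -> uniq s ->
  {in s &, forall x y, ge_by v x y = ge_by v' x y}.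
Proof.
move=> vI v'I ss ss' us x y xs ys; rewrite /ge_by.
case: (ltngtP (index x s) (index y s)) => [lt_xy|lt_yx|eq_xy].
- by rewrite (ltnW (sorted_ge_by_lt vI ss us xs ys lt_xy))
               (ltnW (sorted_ge_by_lt v'I ss' us xs ys lt_xy)).
- by rewrite leqNgt (sorted_ge_by_lt vI ss us ys xs lt_yx)
             leqNgt (sorted_ge_by_lt v'I ss' us ys xs lt_yx).
- by move/(congr1 (nth x s)): eq_xy; rewrite !nth_index // => ->; rewrite !leqnn.
Qed.

Lemma count_gt_index v s x : injective v -> sorted (ge_by v) s -> uniq s ->
  x \in s -> count (fun y => v x < v y) s = index x s.
Proof.
move=> vI; elim: s => //= a t IH a_t /andP[a_notin t_uniq].
have a_top : all (ge_by v a) t := order_path_min (@ge_by_trans v) a_t.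
rewrite in_cons; case: (eqVneq x a) => [->|x_neq_a] /= => [_|xt].
  rewrite ltnn add0n; apply/eqP; rewrite -leqn0 leqNgt -has_count.
  by apply/hasP=> -[y /(allP a_top)]; rewrite /ge_by leqNgt => /negPf->.
have ->: v x < v a by rewrite ltn_neqAle (inj_eq vI) x_neq_a; apply: (allP a_top).
by rewrite (IH (path_sorted a_t)).
Qed.

Lemma topk_sorted v R : sorted (ge_by v) (topk k v R).
Proof. exact/take_sorted/sort_sorted/ge_by_total. Qed.

Lemma topk_uniq v R : uniq (topk k v R).
Proof. by apply: take_uniq; rewrite sort_uniq filter_uniq ?enum_uniq. Qed.

Lemma mem_topk v R x : injective v ->
  (x \in topk k v R) = R x && (#|[pred y | R y & v x < v y]| < k).
Proof.
move=> vI; rewrite /topk; set s := sort _ _.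
have mem_s : (x \in s) = R x by rewrite mem_sort mem_filter mem_enum andbT.
case Rx: (R x); last by apply/negP => /mem_take; rewrite mem_s Rx.
have xs : x \in s by rewrite mem_s.
rewrite (in_take _ xs) -(count_gt_index vI (sort_sorted (@ge_by_total v) _) _ xs);
  last by rewrite sort_uniq filter_uniq ?enum_uniq.
rewrite (permP (permEl (perm_sort _ _))) count_filter card_count_enum.
by congr (_ < k); apply: eq_count => y /=; rewrite andbC.
Qed.

Lemma topk_gt_notin v R a b : injective v ->
  a \in topk k v R -> R b -> b \notin topk k v R -> v b < v a.
Proof.
move=> vI; rewrite /topk; set s := sort _ _ => a_top Rb b_notin.
have ss : sorted (ge_by v) s by apply/sort_sorted/ge_by_total.
have us : uniq s by rewrite sort_uniq filter_uniq ?enum_uniq.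
have a_s : a \in s := mem_take a_top.
have b_s : b \in s by rewrite mem_sort mem_filter mem_enum andbT.
apply: (sorted_ge_by_lt vI ss us a_s b_s).
by move: a_top b_notin; rewrite !in_take // -ltnNge; apply: leq_trans.
Qed.

Lemma topk_predI v R (Y : pred T) : {subset topk k v R <= Y} ->
  topk k v R = topk k v (predI R Y).
Proof.
move=> top_Y; rewrite /topk.
have -> : [seq x <- enum T | predI R Y x] = filter Y (filter R (enum T)).
  by rewrite -filter_predI; apply: eq_filter => x /=; rewrite andbC.
rewrite -(filter_sort (@ge_by_total v) (@ge_by_trans v) Y).
by rewrite take_filter_all //; apply/allP.
Qed.

Lemma eq_sort_ge_by v v' (s : seq T) : injective v' ->
  {in s &, forall x y, ge_by v x y = ge_by v' x y} ->
  sort (ge_by v) s = sort (ge_by v') s.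
Proof.
move=> v'I agree; apply: (sorted_eq (@ge_by_trans v') (ge_by_anti v'I)).
- apply: (@sub_in_sorted _ (mem s) (ge_by v)); first by move=> x y xs ys; rewrite agree.
    by apply/allP => x; rewrite mem_sort.
  exact/sort_sorted/ge_by_total.
- exact/sort_sorted/ge_by_total.
- by rewrite perm_sort perm_sym perm_sort.
Qed.

Lemma eq_topk_in v v' R : injective v' ->
  {in filter R (enum T) &, forall x y, ge_by v x y = ge_by v' x y} ->
  topk k v R = topk k v' R.
Proof. by move=> v'I agree; rewrite /topk (eq_sort_ge_by v'I agree). Qed.

End TopK.

Lemma mem_topk_comp (T T' : finType) k (f : T -> T') (v : T' -> nat)
    (R : pred T) (R' : pred T') x :
  injective f -> injective v -> (forall y, R y -> R' (f y)) -> R x ->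
  f x \in topk k v R' -> x \in topk k (v \o f) R.
Proof.
move=> fI vI RR' Rx.
rewrite (mem_topk _ _ _ vI) (mem_topk _ _ _ (inj_comp vI fI)).
rewrite Rx /= => /andP[_]; apply: leq_ltn_trans.
rewrite -(card_imset _ fI); apply/subset_leq_card/subsetP => _ /imsetP[y + ->].
by rewrite !inE => /andP[Ry ->]; rewrite RR'.
Qed.

Section OneSided.
Variables (n k : nat) (B B' : 'I_n -> nat).
Hypotheses (BI : injective B) (B'I : injective B') (same_top1 : top1 k B =1 top1 k B').

Lemma top1_ge_by_agree_le (c c' : 'I_n) : c <= c' -> c' \in top1 k B c' ->
  ge_by B c c' = ge_by B' c c'.
Proof.
move=> le_cc' c'_top.
have c'_top' : c' \in top1 k B' c' by rewrite -same_top1.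
case c_top: (c \in top1 k B c').
  have sorted' : sorted (ge_by B') (top1 k B c') by rewrite same_top1; apply: topk_sorted.
  exact: (sorted_ge_by_agree BI B'I (topk_sorted _ _ _) sorted' (topk_uniq _ _ _)).
have c_notin' : c \notin top1 k B' c' by rewrite -same_top1 c_top.
have lt_B : B c < B c' by apply: (topk_gt_notin BI c'_top le_cc'); rewrite c_top.
have lt_B' : B' c < B' c' := topk_gt_notin B'I c'_top' le_cc' c_notin'.
by rewrite /ge_by leqNgt lt_B leqNgt lt_B'.
Qed.

Lemma top1_ge_by_agree (c c' : 'I_n) : c \in top1 k B c -> c' \in top1 k B c' ->
  ge_by B c c' = ge_by B' c c'.
Proof.
move=> c_top c'_top; case: (leqP c c') => [|lt_c'c].
  by move=> le_cc'; apply: top1_ge_by_agree_le.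
have neq_cc' : c != c' by rewrite neq_ltn lt_c'c orbT.
rewrite (ge_by_swap BI neq_cc') (ge_by_swap B'I neq_cc').
by rewrite (top1_ge_by_agree_le (ltnW lt_c'c) c_top).
Qed.

End OneSided.

Lemma eq_by_label_filters (T : eqType) (lab : pred T) (s s' : seq T) :
  map lab s = map lab s' -> filter lab s = filter lab s' ->
  filter (predC lab) s = filter (predC lab) s' -> s = s'.
Proof.
elim: s s' => [|a t IH] [|a' t'] //= [lab_a /IH{}IH].
by rewrite -lab_a; case: (lab a) => /= [[-> ?] ?|? [-> ?]]; rewrite IH.
Qed.

Section TwoRows.
Variables (n k : nat).
Implicit Types (A : 'I_2 * 'I_n -> nat) (p : 'I_2 * 'I_n).

Definition row A (r : 'I_2) : 'I_n -> nat := fun j => A (r, j).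

Definition row_top A p : bool := p.2 \in top1 k (row A p.1) p.2.

Definition in_first_row p : bool := p.1 == ord0.

Definition candidates A : seq ('I_2 * 'I_n) :=
  sort (ge_by A) [seq p <- enum {: 'I_2 * 'I_n} | row_top A p].

Definition row_word A : seq bool := map in_first_row (candidates A).

Lemma row_inj A r : injective A -> injective (row A r).
Proof. by move=> AI x y /AI []. Qed.

Lemma size_row_word A : size (row_word A) <= 2 * n.
Proof.
rewrite size_map size_sort size_filter (leq_trans (count_size _ _)) //.
by rewrite -cardE card_prod !card_ord.
Qed.

Lemma in_first_row_inj p q : in_first_row p = in_first_row q -> p.1 = q.1.
Proof.
case: p q => [[[|[|?]] ?] ?] [[[|[|?]] ?] ?] //= _; exact: val_inj.
Qed.

Lemma top3_row_top A i j b p : injective A ->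
  p \in top3 k A i j b -> row_top A p.
Proof.
case: p => r c AI p_top; have := p_top; rewrite /top3 mem_topk //.
case/andP=> /= /andP[/andP[ir rj] cb] _.
apply: (mem_topk_comp (f := pair r) _ AI _ (leqnn c) p_top) => [x y [] //|y yc].
by rewrite /= ir rj (leq_trans yc cb).
Qed.

Section SameRows.
Variables A A' : 'I_2 * 'I_n -> nat.
Hypotheses (AI : injective A) (A'I : injective A').
Hypothesis same_rows : forall r, top1 k (row A r) =1 top1 k (row A' r).

Lemma eq_row_top : row_top A =1 row_top A'.
Proof. by move=> [r c]; rewrite /row_top /= same_rows. Qed.

Lemma row_top_ge_by_agree p q : row_top A p -> row_top A q ->
  p.1 = q.1 -> ge_by A p q = ge_by A' p q.
Proof.
case: p q => [r c] [r' c'] /= c_top c'_top eq_rr'; subst r'.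
exact (top1_ge_by_agree (row_inj (r := r) AI) (row_inj (r := r) A'I) (same_rows r) c_top c'_top).
Qed.

Lemma filter_candidates_eq (P : pred ('I_2 * 'I_n)) :
  {in P &, forall p q, p.1 = q.1} ->
  filter P (candidates A) = filter P (candidates A').
Proof.
move=> P_row; rewrite /candidates !(filter_sort (@ge_by_total _ _) (@ge_by_trans _ _)).
rewrite -(eq_filter eq_row_top); apply: eq_sort_ge_by => // p q.
rewrite !mem_filter => /and3P[Pp p_top _] /and3P[Pq q_top _].
exact: row_top_ge_by_agree (P_row _ _ Pp Pq).
Qed.

Hypothesis same_word : row_word A = row_word A'.

Lemma eq_candidates : candidates A = candidates A'.
Proof.
apply: (eq_by_label_filters same_word); apply: filter_candidates_eq.
  by move=> p q /= /eqP-> /eqP->.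
by move=> p q /= p_snd q_snd; apply: in_first_row_inj; rewrite (negPf p_snd) (negPf q_snd).
Qed.

Lemma candidates_ge_by_agree :
  {in filter (row_top A) (enum {: 'I_2 * 'I_n}) &, forall p q, ge_by A p q = ge_by A' p q}.
Proof.
move=> p q p_in q_in.
have sorted_A : sorted (ge_by A) (candidates A) by apply/sort_sorted/ge_by_total.
have sorted_A' : sorted (ge_by A') (candidates A).
  by rewrite eq_candidates; apply/sort_sorted/ge_by_total.
have uniq_A : uniq (candidates A) by rewrite sort_uniq filter_uniq ?enum_uniq.
by apply: (sorted_ge_by_agree AI A'I sorted_A sorted_A' uniq_A); rewrite mem_sort.
Qed.

Lemma eq_top3 i j b : top3 k A i j b = top3 k A' i j b.
Proof.
rewrite /top3 (topk_predI (Y := row_top A)); last by move=> p /top3_row_top; apply.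
rewrite [RHS](topk_predI (Y := row_top A)); last first.
  by move=> p /top3_row_top; rewrite -eq_row_top; apply.
apply: eq_topk_in => // p q; rewrite !mem_filter => /andP[/andP[_ p_top] _] /andP[/andP[_ q_top] _].
by apply: candidates_ge_by_agree; rewrite mem_filter mem_enum andbT.
Qed.

End SameRows.

End TwoRows.

(* [s] behind a unary marker, in a field of exactly [L.+1] bits when [size s <= L]. *)
Definition pad (L : nat) (s : seq bool) : seq bool := nseq (L - size s) false ++ true :: s.

Definition unpad (l : seq bool) : seq bool := behead (drop (find id l) l).

Lemma padK L : cancel (pad L) unpad.
Proof.
move=> s; rewrite /unpad /pad find_cat has_nseq andbF /= size_nseq addn0.
by rewrite drop_size_cat ?size_nseq.
Qed.

Lemma size_pad L s : size s <= L -> size (pad L s) = L.+1.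
Proof. by move=> le_sL; rewrite size_cat size_nseq /= addnS subnK. Qed.

Lemma pad_cat_inj L s s' t t' : size s <= L -> size s' <= L ->
  pad L s ++ t = pad L s' ++ t' -> s = s' /\ t = t'.
Proof.
move=> le_sL le_s'L /eqP; rewrite eqseq_cat; last by rewrite !size_pad.
by case/andP=> /eqP/(can_inj (padK L)) -> /eqP ->.
Qed.

Lemma exists_decoder (X C Q Y : Type) (valid : X -> Prop) (enc : X -> C)
    (ans : X -> Q -> Y) (y0 : Y) :
  (forall x x', valid x -> valid x' -> enc x = enc x' -> forall q, ans x q = ans x' q) ->
  exists dec : C -> Q -> Y, forall x, valid x -> forall q, dec (enc x) q = ans x q.
Proof.
move=> enc_determines.
exists (fun c q => match excluded_middle_informative (exists x, valid x /\ enc x = c) with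
  | left ex => ans (proj1_sig (constructive_indefinite_description _ ex)) q
  | right _ => y0 end).
move=> x x_valid q; case: excluded_middle_informative => [ex|[]]; last by exists x.
by case: constructive_indefinite_description => x' /= [x'_valid /(enc_determines _ _ x'_valid x_valid)].
Qed.

Section Encoding.
Variables (n k s : nat) (E1 : ('I_n -> nat) -> seq bool) (D1 : seq bool -> 'I_n -> seq 'I_n).
Hypothesis E1_correct : forall B : 'I_n -> nat, injective B ->
  size (E1 B) <= s /\ forall j, D1 (E1 B) j = top1 k B j.

Definition enc2 (A : 'I_2 * 'I_n -> nat) : seq bool :=
  pad s (E1 (row A ord0)) ++ pad s (E1 (row A ord_max)) ++ pad (2 * n) (row_word k A).

Lemma size_enc2 A : injective A -> size (enc2 A) = 2 * s + 2 * n + 3.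
Proof.
move=> AI; have E1_size r := proj1 (E1_correct (row_inj (r := r) AI)).
rewrite size_cat (size_pad (E1_size _)) size_cat (size_pad (E1_size _)).
by rewrite (size_pad (size_row_word _ _)); lia.
Qed.

Lemma enc2_determines_top3 A A' : injective A -> injective A' -> enc2 A = enc2 A' ->
  forall i j b, top3 k A i j b = top3 k A' i j b.
Proof.
move=> AI A'I.
have E1_row B r : injective B -> size (E1 (row B r)) <= s /\
    forall j, D1 (E1 (row B r)) j = top1 k (row B r) j.
  by move=> BI; apply/E1_correct/row_inj.
rewrite /enc2 => /(pad_cat_inj (E1_row _ _ AI).1 (E1_row _ _ A'I).1) [E1_r0].
move/(pad_cat_inj (E1_row _ _ AI).1 (E1_row _ _ A'I).1) => [E1_r1].
move/(can_inj (padK _)) => same_word.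
apply: eq_top3 => // r j; rewrite -(E1_row _ _ AI).2 -(E1_row _ _ A'I).2.
have [->|->] : r = ord0 \/ r = ord_max.
  by case: r => [[|[|?]] ?] //; [left|right]; apply: val_inj.
- by rewrite E1_r0.
- by rewrite E1_r1.
Qed.

End Encoding.

Lemma enc2D_of_enc1D n k s : enc1D n k s -> enc2D n k (2 * s + 2 * n + 3).
Proof.
case=> E1 [D1 E1_correct].
have [D D_correct] := exists_decoder (valid := fun A => injective A)
  (ans := fun A (q : 'I_2 * 'I_2 * 'I_n) => top3 k A q.1.1 q.1.2 q.2) [::]
  (fun A A' AI A'I eq_enc q => enc2_determines_top3 E1_correct AI A'I eq_enc _ _ _).
exists (@enc2 n k s E1), (fun c i j b => D c (i, j, b)) => A AI.
by split=> [|i j b _]; rewrite ?(size_enc2 E1_correct AI) ?D_correct.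
Qed.

Lemma enc2D_leq n k s s' : s <= s' -> enc2D n k s -> enc2D n k s'.
Proof.
move=> le_ss' [E [D E_correct]]; exists E, D => A /E_correct[size_E D_correct].
by split=> //; apply: leq_trans le_ss'.
Qed.

Lemma leq_up_log_exp3 m : m <= up_log 2 (3 ^ m).
Proof.
rewrite -(leq_exp2l _ _ (ltnSn 1)); apply: leq_trans (@up_logP 2 (3 ^ m) isT).
by case: m => // m; rewrite leq_exp2r.
Qed.

Theorem theorem3 :
  exists f : nat -> nat, little_o_n f /\
  forall (S : nat -> nat -> nat) (n k : nat),
    1 <= n -> 1 < k -> k <= 2 * n ->
    enc1D n k (S n k) ->
    enc2D n k (2 * S n k + up_log 2 (3 ^ (2 * n)) + f n).
Proof.
exists (fun=> 3); split.
  by move=> c c_gt0; exists (3 * c) => m; rewrite mulnC.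
move=> S n k _ _ _ /enc2D_of_enc1D; apply: enc2D_leq.
by have := leq_up_log_exp3 (2 * n); lia.
Qed.
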